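(* There exists a geodesic triangle in $\mathbf{Sol}$ with three distinct vertices in $\mathbf{Sol}$, not lying on a common geodesic, whose interior angle sum is exactly $\pi$.
   Context: $\mathbf{Sol}$ is $\mathbb{R}^3$ with coordinates $(x,y,z)$, with group law $(a,b,c)(x,y,z)=(x+ae^{-z},\,y+be^{z},\,z+c)$ and left-invariant Riemannian metric $ds^2=e^{2z}dx^2+e^{-2z}dy^2+dz^2$. A geodesic triangle consists of three points (vertices) and geodesic segments (sides) joining them pairwise; the interior angle at a vertex is the angle, measured with the Riemannian metric at that vertex, between the initial tangent vectors of the two sides issuing from that vertex. *)

From Stdlib Require Import Reals.
Open Scope R_scope.

Definition pt := (R * R * R)%type.
Definition px (p : pt) : R := fst (fst p).
Definition py (p : pt) : R := snd (fst p).
Definition pz (p : pt) : R := snd p.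

Definition sol_inner (p u v : pt) : R :=
  exp (2 * pz p) * px u * px v + exp (- (2 * pz p)) * py u * py v + pz u * pz v.

Definition sol_norm (p u : pt) : R := sqrt (sol_inner p u u).

Definition sol_angle (p u v : pt) : R :=
  acos (sol_inner p u v / (sol_norm p u * sol_norm p v)).

(* A curve t |-> (cx t, cy t, cz t) defined on all of R, together with its
   velocity components (the velocity is pinned down by IsGeodesic below). *)
Record curve := Curve {
  cx : R -> R; cy : R -> R; cz : R -> R;
  vx : R -> R; vy : R -> R; vz : R -> R }.

Definition at_time (g : curve) (t : R) : pt := (cx g t, cy g t, cz g t).
Definition vel (g : curve) (t : R) : pt := (vx g t, vy g t, vz g t).

(* Geodesic equations of Sol (Euler-Lagrange for the metric above):
     x'' + 2 z' x' = 0,  y'' - 2 z' y' = 0,  z'' = e^{2z} x'^2 - e^{-2z} y'^2. *)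
Definition IsGeodesic (g : curve) : Prop :=
  exists ax ay az : R -> R,
  forall t : R,
    derivable_pt_lim (cx g) t (vx g t) /\
    derivable_pt_lim (cy g) t (vy g t) /\
    derivable_pt_lim (cz g) t (vz g t) /\
    derivable_pt_lim (vx g) t (ax t) /\
    derivable_pt_lim (vy g) t (ay t) /\
    derivable_pt_lim (vz g) t (az t) /\
    ax t + 2 * vz g t * vx g t = 0 /\
    ay t - 2 * vz g t * vy g t = 0 /\
    az t = exp (2 * cz g t) * (vx g t) ^ 2 - exp (- (2 * cz g t)) * (vy g t) ^ 2.

(* A geodesic segment from p to q: restriction to [0,1] of a (complete)
   geodesic g with g(0) = p, g(1) = q. *)
Definition GeodSegment (g : curve) (p q : pt) : Prop :=
  IsGeodesic g /\ at_time g 0 = p /\ at_time g 1 = q.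

Definition OnCommonGeodesic (p q r : pt) : Prop :=
  exists (g : curve) (t1 t2 t3 : R), IsGeodesic g /\
    at_time g t1 = p /\ at_time g t2 = q /\ at_time g t3 = r.

(* Interior angle sum of the triangle with sides a : p->q, b : q->r, c : r->p.
   Initial tangent of a side issuing from a vertex where it ends is -g'(1). *)
Definition neg (u : pt) : pt := (- px u, - py u, - pz u).

Definition angle_sum (p q r : pt) (a b c : curve) : R :=
  sol_angle p (vel a 0) (neg (vel c 1)) +
  sol_angle q (vel b 0) (neg (vel a 1)) +
  sol_angle r (vel c 0) (neg (vel b 1)).

(* Take p = (0,0,0), q = (a,a,0) and r = (a,0,ln u) with a = sqrt(3/2), b = sqrt(5/2) and
   u = b - a.  The side pq is a diagonal line of the plane z = 0.  The planes x = a and y = 0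
   are hyperbolic planes (half-plane models of height e^z, resp. e^-z, exchanged by the
   isometry (x, y, z) |-> (y, x, -z)), so qr and rp can be taken to be arcs of semicircles,
   of radii R_qr and R_rp.  The angles at p and q have cosines 1/(sqrt 2 R_rp) and
   1/(sqrt 2 R_qr) and sines (3 + ab)/(sqrt 2 R_rp) and (3 - ab)/(sqrt 2 R_qr); the angle at r
   has cosine (17/8)/(R_rp R_qr), and since (3 + ab)(3 - ab) - 1 = 17/4 the addition formula
   for the cosine shows that it is the supplement of the sum of the other two.
   Along a geodesic the momentum x' e^(2z) is conserved, so x is either constant or never
   takes a value twice; as q and r share their x-coordinate but p does not, no geodesic
   passes through all three vertices. *)

From Stdlib Require Import Reals Lra Psatz.
From Coquelicot Require Import Coquelicot.
Open Scope R_scope.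

(** * Geodesics of Sol *)

Lemma mvt_everywhere (f f' : R -> R) :
  (forall t, derivable_pt_lim f t (f' t)) ->
  forall x y, exists c, f y - f x = f' c * (y - x).
Proof.
  intros Hf x y.
  destruct (MVT_gen f x y f') as [c [_ Hc]].
  - intros t _. apply is_derive_Reals, Hf.
  - intros t _. apply derivable_continuous_pt. exists (f' t). apply Hf.
  - exists c. exact Hc.
Qed.

Lemma geodesic_x_momentum (g : curve) :
  IsGeodesic g ->
  forall t, derivable_pt_lim (fun s => vx g s * exp (2 * cz g s)) t 0.
Proof.
  intros [ax [ay [az Hg]]] t.
  destruct (Hg t) as (_ & _ & Hz & Hvx & _ & _ & Hax & _).
  apply is_derive_Reals.
  replace 0 with (ax t * exp (2 * cz g t) + vx g t * (2 * vz g t * exp (2 * cz g t)))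
    by (replace (ax t) with (- (2 * vz g t * vx g t)) by lra; ring).
  apply (is_derive_mult (vx g) (fun s => exp (2 * cz g s))).
  - apply is_derive_Reals, Hvx.
  - apply (is_derive_comp exp (fun s => 2 * cz g s)).
    + apply is_derive_exp.
    + apply is_derive_scal, is_derive_Reals, Hz.
  - intros; apply Rmult_comm.
Qed.

Lemma geodesic_cx_rigid (g : curve) (t1 t2 t3 : R) :
  IsGeodesic g -> t2 <> t3 -> cx g t2 = cx g t3 -> cx g t1 = cx g t2.
Proof.
  intros Hg Ht Hx.
  assert (Hcx : forall t, derivable_pt_lim (cx g) t (vx g t))
    by (destruct Hg as [ax [ay [az H]]]; intro t; apply H).
  assert (Hstop : exists c, vx g c = 0).
  { destruct (mvt_everywhere _ _ Hcx t2 t3) as [c Hc]. exists c.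
    destruct (Rmult_integral (vx g c) (t3 - t2)); [lra | assumption | lra]. }
  destruct Hstop as [c Hc].
  assert (Hvx : forall t, vx g t = 0).
  { intro t. destruct (mvt_everywhere _ _ (geodesic_x_momentum g Hg) c t) as [c' Hc'].
    rewrite Hc, Rmult_0_l, Rmult_0_l, Rminus_0_r in Hc'.
    destruct (Rmult_integral _ _ Hc') as [H|H]; [exact H|].
    pose proof (exp_pos (2 * cz g t)). lra. }
  destruct (mvt_everywhere _ _ Hcx t2 t1) as [c' Hc']. rewrite Hvx in Hc'. lra.
Qed.

Lemma not_on_common_geodesic (p q r : pt) :
  px p <> px q -> px q = px r -> q <> r -> ~ OnCommonGeodesic p q r.
Proof.
  intros Hpq Hqr Hneq [g [t1 [t2 [t3 [Hg [Hp [Hq Hr]]]]]]].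
  subst p q r. apply Hpq, (geodesic_cx_rigid g t1 t2 t3 Hg).
  - intros ->. apply Hneq. reflexivity.
  - exact Hqr.
Qed.

Definition swap_pt (v : pt) : pt := (py v, px v, - pz v).

Definition swap_xy (g : curve) : curve :=
  Curve (cy g) (cx g) (fun t => - cz g t) (vy g) (vx g) (fun t => - vz g t).

Lemma swap_xy_geodesic (g : curve) : IsGeodesic g -> IsGeodesic (swap_xy g).
Proof.
  intros [ax [ay [az Hg]]].
  exists ay, ax, (fun t => - az t). intro t.
  destruct (Hg t) as (Hx & Hy & Hz & Hvx & Hvy & Hvz & Eqx & Eqy & Eqz). cbn.
  repeat split; try assumption.
  - exact (derivable_pt_lim_opp (cz g) t _ Hz).
  - exact (derivable_pt_lim_opp (vz g) t _ Hvz).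
  - lra.
  - lra.
  - rewrite Eqz, Ropp_mult_distr_r_reverse, Ropp_involutive. ring.
Qed.

Lemma swap_xy_segment (g : curve) (p q : pt) :
  GeodSegment g p q -> GeodSegment (swap_xy g) (swap_pt p) (swap_pt q).
Proof.
  intros [Hg [Hp Hq]]. split; [apply swap_xy_geodesic, Hg|].
  subst p q. split; reflexivity.
Qed.

Lemma vel_swap_xy (g : curve) (t : R) : vel (swap_xy g) t = swap_pt (vel g t).
Proof. reflexivity. Qed.

Definition diagonal_line (alpha : R) : curve :=
  Curve (fun t => alpha * t) (fun t => alpha * t) (fun _ => 0)
        (fun _ => alpha) (fun _ => alpha) (fun _ => 0).

Lemma diagonal_line_geodesic (alpha : R) : IsGeodesic (diagonal_line alpha).
Proof.
  exists (fun _ => 0), (fun _ => 0), (fun _ => 0). intro t. cbn.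
  repeat split; try (apply is_derive_Reals; auto_derive; [exact I | ring]); try ring.
  rewrite Rmult_0_r, Ropp_0, exp_0. ring.
Qed.

Lemma exp_2ln (w : R) : 0 < w -> exp (2 * ln w) = w ^ 2.
Proof.
  intro Hw. replace (2 * ln w) with (ln w + ln w) by ring.
  rewrite exp_plus, exp_ln by exact Hw. ring.
Qed.

Definition sc (l : R) (v : pt) : pt := (l * px v, l * py v, l * pz v).

Lemma pt_eq (x1 y1 z1 x2 y2 z2 : R) :
  x1 = x2 -> y1 = y2 -> z1 = z2 -> (x1, y1, z1) = (x2, y2, z2).
Proof. intros -> -> ->. reflexivity. Qed.

Definition arc_param (E0 d s : R) : R := E0 * exp (d * s).

(* In the plane x = X the metric is (dy^2 + dw^2) / w^2 with w = e^z.  This curve runs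
   along the semicircle (y - M)^2 + w^2 = Rad^2 at hyperbolic speed |d|; the parameter
   E = arc_param E0 d s is the coordinate (Rad + y - M) / w of the circle. *)
Definition half_plane_arc (X M Rad E0 d : R) : curve :=
  Curve (fun _ => X)
        (fun s => M + Rad * (arc_param E0 d s ^ 2 - 1) / (arc_param E0 d s ^ 2 + 1))
        (fun s => ln (2 * Rad * arc_param E0 d s / (arc_param E0 d s ^ 2 + 1)))
        (fun _ => 0)
        (fun s => 4 * Rad * d * arc_param E0 d s ^ 2 / (arc_param E0 d s ^ 2 + 1) ^ 2)
        (fun s => d * (1 - arc_param E0 d s ^ 2) / (arc_param E0 d s ^ 2 + 1)).

Lemma half_plane_arc_geodesic (X M Rad E0 d : R) :
  0 < Rad -> 0 < E0 -> IsGeodesic (half_plane_arc X M Rad E0 d).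
Proof.
  intros HR HE0.
  exists (fun _ => 0),
    (fun s => 8 * Rad * d ^ 2 * arc_param E0 d s ^ 2 * (1 - arc_param E0 d s ^ 2)
              / (arc_param E0 d s ^ 2 + 1) ^ 3),
    (fun s => - (4 * d ^ 2 * arc_param E0 d s ^ 2 / (arc_param E0 d s ^ 2 + 1) ^ 2)).
  intro s. cbn [cx cy cz vx vy vz half_plane_arc]. unfold arc_param.
  assert (HE : 0 < E0 * exp (d * s)) by (apply Rmult_lt_0_compat; [exact HE0 | apply exp_pos]).
  assert (Hw : 0 < 2 * Rad * (E0 * exp (d * s)) / ((E0 * exp (d * s)) ^ 2 + 1))
    by (apply Rdiv_lt_0_compat; nra).
  repeat split; try (apply is_derive_Reals; auto_derive).
  all: try (repeat split;
             first [ nra | exact I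
                   | apply Rmult_lt_0_compat; [nra | apply Rinv_0_lt_compat; nra] ]).
  all: try (field; nra).
  rewrite exp_Ropp, exp_2ln by exact Hw. field. nra.
Qed.

Definition circle_param (M Rad y w : R) : R := (Rad + y - M) / w.

Section OnCircle.
Variables M Rad y w : R.
Hypotheses (Rad_pos : 0 < Rad) (w_pos : 0 < w).
Hypothesis on_circle : (y - M) ^ 2 + w ^ 2 = Rad ^ 2.

Lemma on_circle_dist_lt : - Rad < y - M < Rad.
Proof. split; nra. Qed.

Lemma circle_param_pos : 0 < circle_param M Rad y w.
Proof. unfold circle_param. apply Rdiv_lt_0_compat; nra. Qed.

Lemma circle_param_sq_pm1 :
  circle_param M Rad y w ^ 2 + 1 = 2 * Rad * circle_param M Rad y w / w /\
  circle_param M Rad y w ^ 2 - 1 = 2 * (y - M) * circle_param M Rad y w / w.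
Proof. unfold circle_param. split; (field_simplify_eq; [nra | lra]). Qed.

Lemma circle_param_sq : circle_param M Rad y w ^ 2 = (Rad + (y - M)) / (Rad - (y - M)).
Proof.
  pose proof on_circle_dist_lt. unfold circle_param.
  field_simplify_eq; try lra.
  replace (w ^ 2) with (Rad ^ 2 - (y - M) ^ 2) by lra. ring.
Qed.

Lemma half_plane_arc_at (X E0 d s : R) :
  arc_param E0 d s = circle_param M Rad y w ->
  at_time (half_plane_arc X M Rad E0 d) s = (X, y, ln w) /\
  vel (half_plane_arc X M Rad E0 d) s = sc (d / Rad) (0, w ^ 2, M - y).
Proof.
  intro HE. unfold at_time, vel, sc, px, py, pz; cbn [cx cy cz vx vy vz half_plane_arc fst snd].
  rewrite HE. pose proof circle_param_pos as Hpos.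
  destruct circle_param_sq_pm1 as [Hp Hm].
  set (E := circle_param M Rad y w) in *.
  split; apply pt_eq.
  - reflexivity.
  - rewrite Hp, Hm. field. lra.
  - f_equal. rewrite Hp. field. lra.
  - ring.
  - rewrite Hp. field. lra.
  - replace (1 - E ^ 2) with (- (E ^ 2 - 1)) by ring. rewrite Hp, Hm. field. lra.
Qed.
End OnCircle.

Definition segment_speed (M Rad y0 w0 y1 w1 : R) : R :=
  ln (circle_param M Rad y1 w1 / circle_param M Rad y0 w0).

Definition half_plane_segment (X M Rad y0 w0 y1 w1 : R) : curve :=
  half_plane_arc X M Rad (circle_param M Rad y0 w0) (segment_speed M Rad y0 w0 y1 w1).

Section HalfPlaneSegment.
Variables X M Rad y0 w0 y1 w1 : R.
Hypotheses (Rad_pos : 0 < Rad) (w0_pos : 0 < w0) (w1_pos : 0 < w1).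
Hypotheses (on_circle0 : (y0 - M) ^ 2 + w0 ^ 2 = Rad ^ 2)
           (on_circle1 : (y1 - M) ^ 2 + w1 ^ 2 = Rad ^ 2).

Let seg := half_plane_segment X M Rad y0 w0 y1 w1.
Let d := segment_speed M Rad y0 w0 y1 w1.

Lemma arc_param_segment_0 : arc_param (circle_param M Rad y0 w0) d 0 = circle_param M Rad y0 w0.
Proof. unfold arc_param. rewrite Rmult_0_r, exp_0. ring. Qed.

Lemma arc_param_segment_1 : arc_param (circle_param M Rad y0 w0) d 1 = circle_param M Rad y1 w1.
Proof.
  pose proof (circle_param_pos M Rad y0 w0 Rad_pos w0_pos on_circle0).
  pose proof (circle_param_pos M Rad y1 w1 Rad_pos w1_pos on_circle1).
  unfold arc_param, d, segment_speed. rewrite Rmult_1_r, exp_ln.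
  - field. lra.
  - apply Rdiv_lt_0_compat; assumption.
Qed.

Lemma half_plane_segment_geodesic : GeodSegment seg (X, y0, ln w0) (X, y1, ln w1).
Proof.
  split; [apply half_plane_arc_geodesic, circle_param_pos; assumption |].
  split.
  - apply (half_plane_arc_at M Rad y0 w0); auto using arc_param_segment_0.
  - apply (half_plane_arc_at M Rad y1 w1); auto using arc_param_segment_1.
Qed.

Lemma half_plane_segment_vel_0 : vel seg 0 = sc (d / Rad) (0, w0 ^ 2, M - y0).
Proof. apply (half_plane_arc_at M Rad y0 w0); auto using arc_param_segment_0. Qed.

Lemma half_plane_segment_vel_1 : vel seg 1 = sc (d / Rad) (0, w1 ^ 2, M - y1).
Proof. apply (half_plane_arc_at M Rad y1 w1); auto using arc_param_segment_1. Qed.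

Lemma circle_param_lt : y1 < y0 -> circle_param M Rad y1 w1 < circle_param M Rad y0 w0.
Proof.
  intro Hy.
  pose proof (on_circle_dist_lt M Rad y0 w0 Rad_pos w0_pos on_circle0).
  pose proof (on_circle_dist_lt M Rad y1 w1 Rad_pos w1_pos on_circle1).
  pose proof (circle_param_pos M Rad y0 w0 Rad_pos w0_pos on_circle0).
  pose proof (circle_param_pos M Rad y1 w1 Rad_pos w1_pos on_circle1).
  apply Rsqr_incrst_0; try lra.
  rewrite !Rsqr_pow2, !circle_param_sq by assumption.
  apply (Rmult_lt_reg_r ((Rad - (y0 - M)) * (Rad - (y1 - M)))); [nra |].
  field_simplify; nra.
Qed.

Lemma segment_speed_neg : y1 < y0 -> d < 0.
Proof.
  intro Hy. pose proof (circle_param_lt Hy).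
  pose proof (circle_param_pos M Rad y1 w1 Rad_pos w1_pos on_circle1).
  unfold d, segment_speed. rewrite <- ln_1. apply ln_increasing.
  - apply Rdiv_lt_0_compat; lra.
  - apply (Rmult_lt_reg_r (circle_param M Rad y0 w0)); [lra |].
    unfold Rdiv. rewrite Rmult_assoc, Rinv_l, Rmult_1_l, Rmult_1_r; lra.
Qed.
End HalfPlaneSegment.

(** * Angles *)

Lemma sol_norm_sc (p U : pt) (l : R) : sol_norm p (sc l U) = Rabs l * sol_norm p U.
Proof.
  unfold sol_norm.
  replace (sol_inner p (sc l U) (sc l U)) with (l * l * sol_inner p U U)
    by (unfold sol_inner, sc, px, py, pz; cbn; ring).
  rewrite sqrt_mult_alt by apply Rle_0_sqr. rewrite <- (sqrt_Rsqr_abs l). reflexivity.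
Qed.

Lemma neg_sc (l : R) (U : pt) : neg (sc l U) = sc (- l) U.
Proof. unfold neg, sc; cbn. apply pt_eq; ring. Qed.

Lemma sol_angle_sc (p U V : pt) (l1 l2 : R) :
  0 < l1 * l2 -> sol_angle p (sc l1 U) (sc l2 V) = sol_angle p U V.
Proof.
  intro Hl. unfold sol_angle. rewrite !sol_norm_sc.
  replace (sol_inner p (sc l1 U) (sc l2 V)) with (l1 * l2 * sol_inner p U V)
    by (unfold sol_inner, sc, px, py, pz; cbn; ring).
  replace (Rabs l1 * sol_norm p U * (Rabs l2 * sol_norm p V))
    with (l1 * l2 * (sol_norm p U * sol_norm p V))
    by (rewrite <- (Rabs_pos_eq (l1 * l2)), Rabs_mult by lra; ring).
  rewrite Rdiv_mult_l_l by lra. reflexivity.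
Qed.

Lemma sol_inner_flat (p U V : pt) :
  pz p = 0 -> sol_inner p U V = px U * px V + py U * py V + pz U * pz V.
Proof. intro Hz. unfold sol_inner. rewrite Hz, Rmult_0_r, Ropp_0, exp_0. ring. Qed.

Lemma sol_angle_eq (p U V : pt) (c n1 n2 : R) :
  0 <= n1 -> 0 <= n2 ->
  sol_inner p U V = c -> sol_inner p U U = n1 ^ 2 -> sol_inner p V V = n2 ^ 2 ->
  sol_angle p U V = acos (c / (n1 * n2)).
Proof.
  intros H1 H2 Hc HU HV. unfold sol_angle, sol_norm.
  rewrite Hc, HU, HV, !sqrt_pow2 by assumption. reflexivity.
Qed.

Lemma acos_le_PI2 (x : R) : 0 <= x <= 1 -> acos x <= PI / 2.
Proof.
  intro Hx. destruct (Rle_lt_dec (acos x) (PI / 2)) as [|Hlt]; [assumption | exfalso].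
  pose proof (acos_bound x).
  assert (Hcos : cos (acos x) < 0) by (apply cos_lt_0; lra).
  rewrite cos_acos in Hcos by lra. lra.
Qed.

Lemma sqrt_1_minus_ratio_sq (c s r : R) :
  0 <= s -> 0 < r -> c ^ 2 + s ^ 2 = r ^ 2 -> sqrt (1 - (c / r)²) = s / r.
Proof.
  intros Hs Hr Hcs.
  replace (1 - (c / r)²) with ((s / r)²) by (unfold Rsqr; field_simplify_eq; lra).
  apply sqrt_Rsqr, Rdiv_le_0_compat; lra.
Qed.

Lemma acos_sum_supplementary (c1 s1 r1 c2 s2 r2 : R) :
  0 <= c1 -> 0 <= s1 -> 0 < r1 -> c1 ^ 2 + s1 ^ 2 = r1 ^ 2 ->
  0 <= c2 -> 0 <= s2 -> 0 < r2 -> c2 ^ 2 + s2 ^ 2 = r2 ^ 2 ->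
  acos (c1 / r1) + acos (c2 / r2) + acos ((s1 * s2 - c1 * c2) / (r1 * r2)) = PI.
Proof.
  intros Hc1 Hs1 Hr1 H1 Hc2 Hs2 Hr2 H2.
  assert (Hx1 : 0 <= c1 / r1 <= 1).
  { split; [apply Rdiv_le_0_compat; lra |].
    apply Rmult_le_reg_r with r1; [lra |]. field_simplify; nra. }
  assert (Hx2 : 0 <= c2 / r2 <= 1).
  { split; [apply Rdiv_le_0_compat; lra |].
    apply Rmult_le_reg_r with r2; [lra |]. field_simplify; nra. }
  set (alpha := acos (c1 / r1)). set (beta := acos (c2 / r2)).
  assert (Hcos : cos (alpha + beta) = - ((s1 * s2 - c1 * c2) / (r1 * r2))).
  { unfold alpha, beta. rewrite cos_plus, !cos_acos, !sin_acos by lra.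
    rewrite (sqrt_1_minus_ratio_sq c1 s1 r1), (sqrt_1_minus_ratio_sq c2 s2 r2) by assumption.
    field. lra. }
  assert (Hrange : 0 <= alpha + beta <= PI).
  { pose proof (acos_le_PI2 _ Hx1). pose proof (acos_le_PI2 _ Hx2).
    pose proof (acos_bound (c1 / r1)). pose proof (acos_bound (c2 / r2)).
    unfold alpha, beta. lra. }
  rewrite <- (acos_cos (alpha + beta)) at 1 by exact Hrange.
  rewrite Hcos, acos_opp. ring.
Qed.

(** * The triangle *)

Definition a : R := sqrt (3 / 2).
Definition b : R := sqrt (5 / 2).

Lemma a_sq : a * a = 3 / 2. Proof. apply sqrt_sqrt. lra. Qed.
Lemma b_sq : b * b = 5 / 2. Proof. apply sqrt_sqrt. lra. Qed.
Lemma a_pos : 0 < a. Proof. apply sqrt_lt_R0. lra. Qed.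
Lemma b_pos : 0 < b. Proof. apply sqrt_lt_R0. lra. Qed.
Lemma a_lt_b : a < b.
Proof. pose proof a_sq. pose proof b_sq. pose proof a_pos. pose proof b_pos. nra. Qed.
Lemma ab_sq : (a * b) ^ 2 = 15 / 4.
Proof. replace ((a * b) ^ 2) with (a * a * (b * b)) by ring. rewrite a_sq, b_sq. lra. Qed.
Lemma ab_lt_3 : a * b < 3.
Proof. pose proof a_sq. pose proof b_sq. pose proof a_pos. pose proof b_pos. nra. Qed.

Lemma sqrt2_sq : sqrt 2 ^ 2 = 2.
Proof. apply pow2_sqrt. lra. Qed.

Definition u : R := b - a.
Definition centre_qr : R := b - a / 2.
Definition radius_qr : R := sqrt (1 + (a - centre_qr) ^ 2).
Definition centre_rp : R := 3 * a / 2 + b.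
Definition radius_rp : R := sqrt (1 + centre_rp ^ 2).

Lemma u_pos : 0 < u. Proof. unfold u. pose proof a_lt_b. lra. Qed.

Lemma radius_qr_sq : radius_qr ^ 2 = 1 + (a - centre_qr) ^ 2.
Proof. apply pow2_sqrt. pose proof (pow2_ge_0 (a - centre_qr)). lra. Qed.
Lemma radius_rp_sq : radius_rp ^ 2 = 1 + centre_rp ^ 2.
Proof. apply pow2_sqrt. pose proof (pow2_ge_0 centre_rp). lra. Qed.
Lemma radius_qr_pos : 0 < radius_qr.
Proof. apply sqrt_lt_R0. pose proof (pow2_ge_0 (a - centre_qr)). lra. Qed.
Lemma radius_rp_pos : 0 < radius_rp.
Proof. apply sqrt_lt_R0. pose proof (pow2_ge_0 centre_rp). lra. Qed.

Lemma circle_qr_q : (a - centre_qr) ^ 2 + 1 ^ 2 = radius_qr ^ 2.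
Proof. rewrite radius_qr_sq. ring. Qed.
Lemma circle_qr_r : (0 - centre_qr) ^ 2 + u ^ 2 = radius_qr ^ 2.
Proof. rewrite radius_qr_sq. unfold centre_qr, u. pose proof a_sq. pose proof b_sq. nra. Qed.
Lemma circle_rp_r : (a - centre_rp) ^ 2 + (/ u) ^ 2 = radius_rp ^ 2.
Proof.
  rewrite radius_rp_sq. pose proof u_pos. pose proof a_sq. pose proof b_sq.
  assert (Hu2 : u ^ 2 = 4 - 2 * a * b) by (unfold u; nra).
  assert (Hu : u ^ 2 * (4 + 2 * a * b) = 1).
  { rewrite Hu2. pose proof ab_sq. nra. }
  replace ((/ u) ^ 2) with (4 + 2 * a * b) by (field_simplify_eq; lra).
  unfold centre_rp. nra.
Qed.
Lemma circle_rp_p : (0 - centre_rp) ^ 2 + 1 ^ 2 = radius_rp ^ 2.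
Proof. rewrite radius_rp_sq. ring. Qed.

Definition vertex_p : pt := (0, 0, 0).
Definition vertex_q : pt := (a, a, 0).
Definition vertex_r : pt := (a, 0, ln u).

Definition side_pq : curve := diagonal_line a.
Definition side_qr : curve := half_plane_segment a centre_qr radius_qr a 1 0 u.
Definition side_rp : curve := swap_xy (half_plane_segment 0 centre_rp radius_rp a (/ u) 0 1).

Definition speed_qr : R := segment_speed centre_qr radius_qr a 1 0 u.
Definition speed_rp : R := segment_speed centre_rp radius_rp a (/ u) 0 1.

Lemma speed_qr_neg : speed_qr < 0.
Proof.
  apply segment_speed_neg; auto using radius_qr_pos, u_pos, circle_qr_q, circle_qr_r, a_pos; lra.
Qed.

Lemma speed_rp_neg : speed_rp < 0.
Proof.
  pose proof u_pos.
  apply segment_speed_neg;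
    auto using radius_rp_pos, circle_rp_r, circle_rp_p, a_pos, Rinv_0_lt_compat; lra.
Qed.

Lemma side_pq_segment : GeodSegment side_pq vertex_p vertex_q.
Proof.
  split; [apply diagonal_line_geodesic |].
  split; unfold at_time, vertex_p, vertex_q; cbn; apply pt_eq; ring.
Qed.

Lemma side_qr_segment : GeodSegment side_qr vertex_q vertex_r.
Proof.
  unfold vertex_q, vertex_r. replace (a, a, 0) with (a, a, ln 1) by (rewrite ln_1; reflexivity).
  apply half_plane_segment_geodesic; auto using radius_qr_pos, u_pos, circle_qr_q, circle_qr_r; lra.
Qed.

Lemma side_rp_segment : GeodSegment side_rp vertex_r vertex_p.
Proof.
  pose proof u_pos.
  replace vertex_r with (swap_pt (0, a, ln (/ u)))
    by (unfold swap_pt, vertex_r; cbn; rewrite ln_Rinv, Ropp_involutive by lra; reflexivity).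
  replace vertex_p with (swap_pt (0, 0, ln 1))
    by (unfold swap_pt, vertex_p; cbn; rewrite ln_1, Ropp_0; reflexivity).
  apply swap_xy_segment, half_plane_segment_geodesic;
    auto using radius_rp_pos, circle_rp_r, circle_rp_p, Rinv_0_lt_compat; lra.
Qed.

Lemma vel_side_pq (t : R) : vel side_pq t = sc a (1, 1, 0).
Proof. unfold vel, sc, px, py, pz; cbn. apply pt_eq; ring. Qed.

Lemma vel_side_qr_0 : vel side_qr 0 = sc (speed_qr / radius_qr) (0, 1, centre_qr - a).
Proof.
  unfold side_qr. rewrite half_plane_segment_vel_0;
    auto using radius_qr_pos, u_pos, circle_qr_q, circle_qr_r; try lra.
  unfold sc; cbn. fold speed_qr. apply pt_eq; ring.
Qed.

Lemma vel_side_qr_1 : vel side_qr 1 = sc (speed_qr / radius_qr) (0, u ^ 2, centre_qr).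
Proof.
  unfold side_qr. rewrite half_plane_segment_vel_1;
    auto using radius_qr_pos, u_pos, circle_qr_q, circle_qr_r; try lra.
  unfold sc; cbn. fold speed_qr. apply pt_eq; ring.
Qed.

(* Written with a scale factor of the same sign as the one of [neg (vel side_qr 1)], so that
   [sol_angle_sc] applies at r. *)
Lemma vel_side_rp_0 :
  vel side_rp 0 = sc (- (speed_rp / radius_rp)) (- (/ u) ^ 2, 0, centre_rp - a).
Proof.
  pose proof u_pos. unfold side_rp. rewrite vel_swap_xy, half_plane_segment_vel_0;
    auto using radius_rp_pos, circle_rp_r, circle_rp_p, Rinv_0_lt_compat; try lra.
  unfold swap_pt, sc; cbn. fold speed_rp. apply pt_eq; ring.
Qed.

Lemma vel_side_rp_1 : vel side_rp 1 = sc (speed_rp / radius_rp) (1, 0, - centre_rp).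
Proof.
  pose proof u_pos. unfold side_rp. rewrite vel_swap_xy, half_plane_segment_vel_1;
    auto using radius_rp_pos, circle_rp_r, circle_rp_p, Rinv_0_lt_compat; try lra.
  unfold swap_pt, sc; cbn. fold speed_rp. apply pt_eq; ring.
Qed.

Lemma angle_p :
  sol_angle vertex_p (vel side_pq 0) (neg (vel side_rp 1)) = acos (1 / (sqrt 2 * radius_rp)).
Proof.
  pose proof a_pos. pose proof speed_rp_neg. pose proof radius_rp_pos.
  rewrite vel_side_pq, vel_side_rp_1, neg_sc, sol_angle_sc.
  2: { assert (speed_rp / radius_rp < 0) by (apply Rdiv_neg_pos; lra). nra. }
  apply sol_angle_eq; try (apply sqrt_pos || lra);
    rewrite sol_inner_flat by reflexivity; cbn [px py pz fst snd].
  - ring.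
  - rewrite sqrt2_sq. ring.
  - rewrite radius_rp_sq. ring.
Qed.

Lemma angle_q :
  sol_angle vertex_q (vel side_qr 0) (neg (vel side_pq 1)) = acos (1 / (radius_qr * sqrt 2)).
Proof.
  pose proof a_pos. pose proof speed_qr_neg. pose proof radius_qr_pos.
  rewrite vel_side_qr_0, vel_side_pq, neg_sc, sol_angle_sc.
  2: { assert (speed_qr / radius_qr < 0) by (apply Rdiv_neg_pos; lra). nra. }
  apply sol_angle_eq; try (apply sqrt_pos || lra);
    rewrite sol_inner_flat by reflexivity; cbn [px py pz fst snd].
  - ring.
  - rewrite radius_qr_sq. ring.
  - rewrite sqrt2_sq. ring.
Qed.

Lemma angle_r :
  sol_angle vertex_r (vel side_rp 0) (neg (vel side_qr 1))
  = acos ((centre_rp - a) * centre_qr / (radius_rp * radius_qr)).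
Proof.
  pose proof u_pos as Hu. pose proof speed_qr_neg. pose proof radius_qr_pos.
  pose proof speed_rp_neg. pose proof radius_rp_pos.
  rewrite vel_side_rp_0, vel_side_qr_1, neg_sc, sol_angle_sc.
  2: { assert (speed_qr / radius_qr < 0) by (apply Rdiv_neg_pos; lra).
       assert (speed_rp / radius_rp < 0) by (apply Rdiv_neg_pos; lra). nra. }
  apply sol_angle_eq; try lra; unfold sol_inner, vertex_r; cbn [px py pz fst snd];
    rewrite exp_Ropp, exp_2ln by exact Hu.
  - field. lra.
  - rewrite <- circle_rp_r. field. lra.
  - rewrite <- circle_qr_r. field. lra.
Qed.

Lemma angle_sum_PI :
  acos (1 / (sqrt 2 * radius_rp)) + acos (1 / (radius_qr * sqrt 2))
  + acos ((centre_rp - a) * centre_qr / (radius_rp * radius_qr)) = PI.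
Proof.
  pose proof a_sq. pose proof b_sq. pose proof ab_sq. pose proof ab_lt_3.
  pose proof a_pos. pose proof b_pos. pose proof radius_qr_pos. pose proof radius_rp_pos.
  assert (Hs2 : 0 < sqrt 2) by (apply sqrt_lt_R0; lra).
  replace ((centre_rp - a) * centre_qr / (radius_rp * radius_qr))
    with (((3 + a * b) * (3 - a * b) - 1 * 1) / ((sqrt 2 * radius_rp) * (radius_qr * sqrt 2))).
  - apply acos_sum_supplementary; try nra.
    + rewrite Rpow_mult_distr, sqrt2_sq, radius_rp_sq. unfold centre_rp. nra.
    + rewrite Rpow_mult_distr, sqrt2_sq, radius_qr_sq. unfold centre_qr. nra.
  - replace ((centre_rp - a) * centre_qr) with (17 / 8) by (unfold centre_rp, centre_qr; nra).
    replace (sqrt 2 * radius_rp * (radius_qr * sqrt 2))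
      with (sqrt 2 ^ 2 * (radius_rp * radius_qr)) by ring.
    rewrite sqrt2_sq. field_simplify_eq; nra.
Qed.

Theorem lemma3p4 :
  exists (p q r : pt) (a b c : curve),
    p <> q /\ q <> r /\ r <> p /\
    ~ OnCommonGeodesic p q r /\
    GeodSegment a p q /\ GeodSegment b q r /\ GeodSegment c r p /\
    angle_sum p q r a b c = PI.
Proof.
  exists vertex_p, vertex_q, vertex_r, side_pq, side_qr, side_rp.
  pose proof a_pos as Ha.
  assert (Hqr : vertex_q <> vertex_r) by (intro E; apply (f_equal py) in E; cbn in E; lra).
  split; [intro E; apply (f_equal px) in E; cbn in E; lra |].
  split; [exact Hqr |].
  split; [intro E; apply (f_equal px) in E; cbn in E; lra |].
  split; [apply not_on_common_geodesic; [cbn; lra | reflexivity | exact Hqr] |].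
  split; [exact side_pq_segment |].
  split; [exact side_qr_segment |].
  split; [exact side_rp_segment |].
  unfold angle_sum. rewrite angle_p, angle_q, angle_r. exact angle_sum_PI.
Qed.
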